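(* Let $n\ge2$ and $1\le j\le n+2$ be integers. For every $\lambda\in[1/n,\infty)$, $$\frac{\lambda}{(1+\lambda)^{j-1}}\le\lambda_{n,j}(\lambda)=\widehat\lambda_{n,j-1}(\lambda)\le\lambda^{2-j}$$ (for $j=1$ only the outer inequalities are meant). In particular, if $j\ge3$ then $\lambda_{n,j}(\lambda)\to0$ as $\lambda\to\infty$.
   Context: For an integer $n\ge1$ let $f_n(x)=(1+x)^{n+1}/x$ for $x>0$. The function $f_n$ is strictly decreasing on $(0,1/n]$ and strictly increasing on $[1/n,\infty)$. Regular graph exponents (Schmidt–Summerer), defined algebraically. For $\lambda\in[1/n,\infty)$ let $\mu\in(0,1/n]$ be the unique solution of $f_n(\mu)=f_n(\lambda)$, and set $$\lambda_{n,j}(\lambda)=\lambda^{1-\frac{j-1}{n+1}}\mu^{\frac{j-1}{n+1}},\qquad 1\le j\le n+2 .$$ All ratios $\lambda_{n,j}/\lambda_{n,j+1}$ are equal. Put $\widehat\lambda_{n,j}(\lambda):=\lambda_{n,j+1}(\lambda)$ for $1\le j\le n+1$. These are the simultaneous approximation exponents of the regular graph in dimension $n$ with parameter $\lambda_n=\lambda$. In particular $\lambda_{n,2}(\lambda)=\widehat\lambda_n(\lambda)\le 1$. *)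

From Stdlib Require Import Reals ClassicalEpsilon.
Open Scope R_scope.

Definition f_n (n : nat) (x : R) : R := (1 + x) ^ (n + 1) / x.

(* mu_n(lambda): the unique mu in (0,1/n] with f_n(mu) = f_n(lambda)
   (chosen by Hilbert's epsilon; for lambda >= 1/n it exists and is unique). *)
Definition mu_n (n : nat) (lam : R) : R :=
  epsilon (inhabits 0)
    (fun m => 0 < m /\ m <= 1 / INR n /\ f_n n m = f_n n lam).

Definition lambda_nj (n j : nat) (lam : R) : R :=
  Rpower lam (1 - (INR j - 1) / (INR n + 1)) *
  Rpower (mu_n n lam) ((INR j - 1) / (INR n + 1)).

Definition hat_lambda_nj (n j : nat) (lam : R) : R := lambda_nj n (j + 1) lam.

(* The defining relation f_n(mu) = f_n(lambda) gives the two-sided estimate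
   lambda / (1 + lambda)^(n+1) <= mu <= lambda^(-n).  The lower bound is immediate
   from (1 + mu)^(n+1) >= 1; the upper one reduces to lambda * mu <= 1, which holds
   because f_n is increasing on [1, oo) and f_n(1/mu) >= f_n(mu) when mu <= 1.
   Since lambda_{n,j} = lambda^(1-t) * mu^t with t = (j-1)/(n+1) >= 0 is monotone
   in mu, the two bounds on mu become the bounds lambda / (1 + lambda)^(j-1) and
   lambda^(2-j) on lambda_{n,j}; for j >= 3 the latter is at most 1/lambda. *)

From Stdlib Require Import Reals Lra Lia ClassicalEpsilon.
Open Scope R_scope.

Lemma pow_bernoulli (y : R) (m : nat) : -1 <= y -> 1 + INR m * y <= (1 + y) ^ m.
Proof.
  intros Hy; induction m as [|m IH]; [simpl; lra|].
  rewrite S_INR; simpl.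
  assert (0 <= INR m) by apply pos_INR.
  assert (0 <= INR m * (y * y)) by (apply Rmult_le_pos; nra).
  assert (0 <= (1 + y) * ((1 + y) ^ m - (1 + INR m * y))) by (apply Rmult_le_pos; lra).
  nra.
Qed.

Lemma Rpower_Ropp_INR (x : R) (k : nat) : 0 < x -> Rpower x (- INR k) = / x ^ k.
Proof. intros Hx; rewrite Rpower_Ropp, Rpower_pow; auto. Qed.

Lemma INR_inv_pos (n : nat) : (1 <= n)%nat -> 0 < 1 / INR n.
Proof. intros Hn; apply Rdiv_lt_0_compat; [lra|apply lt_0_INR; lia]. Qed.

Lemma INR_inv_le_1 (n : nat) : (1 <= n)%nat -> 1 / INR n <= 1.
Proof.
  intros Hn; assert (1 <= INR n) by (apply (le_INR 1); lia).
  unfold Rdiv; rewrite Rmult_1_l, <- Rinv_1; apply Rinv_le_contravar; lra.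
Qed.

Lemma f_n_pos (n : nat) (x : R) : 0 < x -> 0 < f_n n x.
Proof. intros Hx; apply Rdiv_lt_0_compat; [apply pow_lt|]; lra. Qed.

Lemma f_n_eq_cross (n : nat) (x y : R) : 0 < x -> 0 < y ->
  f_n n x = f_n n y -> y * (1 + x) ^ (n + 1) = x * (1 + y) ^ (n + 1).
Proof.
  unfold f_n; intros Hx Hy E.
  apply (Rmult_eq_compat_l (x * y)) in E.
  replace (x * y * ((1 + x) ^ (n + 1) / x)) with (y * (1 + x) ^ (n + 1)) in E
    by (field; lra).
  rewrite E; field; lra.
Qed.

(* Bernoulli's inequality at the point y with 1 + x = (1 + 1/n)(1 + y). *)
Lemma f_n_ge_min (n : nat) (x : R) : (1 <= n)%nat -> 0 < x ->
  f_n n (1 / INR n) <= f_n n x.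
Proof.
  intros Hn Hx.
  assert (Hn0 : 0 < INR n) by (apply lt_0_INR; lia).
  set (y := (x * INR n - 1) / (INR n + 1)).
  assert (Hy : y * (INR n + 1) = x * INR n - 1) by (unfold y; field; lra).
  assert (E : 1 + x = (1 + 1 / INR n) * (1 + y)) by (unfold y; field; lra).
  assert (B := pow_bernoulli y (n + 1) ltac:(nra)).
  rewrite plus_INR in B; simpl INR in B.
  assert (Hc : 0 < (1 + 1 / INR n) ^ (n + 1)).
  { pose proof (INR_inv_pos n Hn); apply pow_lt; lra. }
  unfold f_n; rewrite E, Rpow_mult_distr.
  replace ((1 + 1 / INR n) ^ (n + 1) / (1 / INR n)) with
    ((1 + 1 / INR n) ^ (n + 1) * (INR n * x) / x) by (field; lra).
  apply Rmult_le_compat_r; [left; apply Rinv_0_lt_compat; lra|].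
  apply Rmult_le_compat_l; lra.
Qed.

Lemma pow_cross_lt (a b : R) (N : nat) : 1 <= a -> a < b -> (2 <= N)%nat ->
  b * (1 + a) ^ N < a * (1 + b) ^ N.
Proof.
  intros Ha Hab HN; induction HN as [|N HN IH].
  - assert (0 < (b - a) * (a * b - 1)) by (apply Rmult_lt_0_compat; nra).
    simpl; nra.
  - assert (0 < a * (1 + b) ^ N) by (apply Rmult_lt_0_compat; [|apply pow_lt]; lra).
    simpl; nra.
Qed.

Lemma f_n_increasing (n : nat) (a b : R) : (1 <= n)%nat -> 1 <= a -> a < b ->
  f_n n a < f_n n b.
Proof.
  intros Hn Ha Hab; unfold f_n.
  assert (H := pow_cross_lt a b (n + 1) Ha Hab ltac:(lia)).
  apply (Rmult_lt_reg_l (a * b)); [nra|].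
  replace (a * b * ((1 + a) ^ (n + 1) / a)) with (b * (1 + a) ^ (n + 1)) by (field; lra).
  replace (a * b * ((1 + b) ^ (n + 1) / b)) with (a * (1 + b) ^ (n + 1)) by (field; lra).
  exact H.
Qed.

Lemma f_n_Rinv (n : nat) (x : R) : (1 <= n)%nat -> 0 < x ->
  f_n n (/ x) * x ^ (n - 1) = f_n n x.
Proof.
  intros Hn Hx; unfold f_n.
  replace (n + 1)%nat with (S (S (n - 1))) by lia.
  replace (1 + / x) with ((1 + x) * / x) by (field; lra).
  rewrite Rpow_mult_distr, pow_inv; simpl; field.
  split; [lra|apply pow_nonzero; lra].
Qed.

Lemma mu_n_spec (n : nat) (lam : R) : (1 <= n)%nat -> 1 / INR n <= lam ->
  0 < mu_n n lam /\ mu_n n lam <= 1 / INR n /\ f_n n (mu_n n lam) = f_n n lam.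
Proof.
  intros Hn Hl.
  apply (epsilon_spec (inhabits 0)
           (fun m => 0 < m /\ m <= 1 / INR n /\ f_n n m = f_n n lam)).
  assert (Hn0 : 0 < INR n) by (apply lt_0_INR; lia).
  pose proof (INR_inv_pos n Hn) as Hp.
  set (F := f_n n lam).
  set (g := fun x => x * F - (1 + x) ^ (n + 1)).
  assert (Hg0 : g 0 = -1) by (unfold g; rewrite Rplus_0_r, pow1; ring).
  assert (Hg1 : 0 <= g (1 / INR n)).
  { assert (f_n n (1 / INR n) <= F) by (apply f_n_ge_min; [exact Hn | lra]).
    unfold g, f_n in *.
    replace (1 / INR n * F - (1 + 1 / INR n) ^ (n + 1))
      with (1 / INR n * (F - (1 + 1 / INR n) ^ (n + 1) / (1 / INR n))) by (field; lra).
    apply Rmult_le_pos; lra. }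
  destruct (IVT_cor g 0 (1 / INR n)) as [z [Hz Hgz]];
    [unfold g; reg | lra | rewrite Hg0; nra |].
  assert (Hz0 : z <> 0) by (intro; subst; lra).
  exists z; repeat split; try lra.
  unfold f_n; replace ((1 + z) ^ (n + 1)) with (z * F) by (unfold g in Hgz; lra).
  field; lra.
Qed.

Lemma mu_n_pos (n : nat) (lam : R) : (1 <= n)%nat -> 1 / INR n <= lam ->
  0 < mu_n n lam.
Proof. intros Hn Hl; apply (mu_n_spec n lam Hn Hl). Qed.

Lemma mu_n_mul_le_1 (n : nat) (lam : R) : (1 <= n)%nat -> 1 / INR n <= lam ->
  lam * mu_n n lam <= 1.
Proof.
  intros Hn Hl; destruct (mu_n_spec n lam Hn Hl) as [Hm [Hm1 Hf]].
  set (m := mu_n n lam) in *.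
  pose proof (INR_inv_le_1 n Hn).
  assert (Him : 1 <= / m) by (rewrite <- Rinv_1; apply Rinv_le_contravar; lra).
  apply Rnot_lt_le; intro Hlt.
  assert (Hlt' : / m < lam) by (apply (Rmult_lt_reg_r m); [lra|]; rewrite Rinv_l; lra).
  (* f_n (1/m) = f_n m / m^(n-1) >= f_n m = f_n lam, against monotonicity. *)
  assert (Hinc := f_n_increasing n (/ m) lam Hn Him Hlt').
  assert (Hpow : m ^ (n - 1) <= 1) by (rewrite <- (pow1 (n - 1)); apply pow_incr; lra).
  assert (Hpos : 0 < f_n n (/ m)) by (apply f_n_pos, Rinv_0_lt_compat; lra).
  pose proof (f_n_Rinv n m Hn Hm).
  nra.
Qed.

Lemma mu_n_ge (n : nat) (lam : R) : (1 <= n)%nat -> 1 / INR n <= lam ->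
  lam / (1 + lam) ^ (n + 1) <= mu_n n lam.
Proof.
  intros Hn Hl; destruct (mu_n_spec n lam Hn Hl) as [Hm [_ Hf]].
  assert (Hlam : 0 < lam) by (pose proof (INR_inv_pos n ltac:(assumption)); lra).
  pose proof (f_n_eq_cross n _ _ Hm Hlam Hf) as E.
  assert (1 <= (1 + mu_n n lam) ^ (n + 1)) by (apply pow_R1_Rle; lra).
  assert (0 < (1 + lam) ^ (n + 1)) by (apply pow_lt; lra).
  apply (Rmult_le_reg_r ((1 + lam) ^ (n + 1))); [lra|].
  unfold Rdiv; rewrite Rmult_assoc, Rinv_l by lra; nra.
Qed.

Lemma mu_n_le (n : nat) (lam : R) : (1 <= n)%nat -> 1 / INR n <= lam ->
  mu_n n lam <= / lam ^ n.
Proof.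
  intros Hn Hl; destruct (mu_n_spec n lam Hn Hl) as [Hm [_ Hf]].
  assert (Hlam : 0 < lam) by (pose proof (INR_inv_pos n ltac:(assumption)); lra).
  pose proof (f_n_eq_cross n _ _ Hm Hlam Hf) as E.
  pose proof (mu_n_mul_le_1 n lam Hn Hl) as Hprod.
  set (m := mu_n n lam) in *.
  assert (Hpow : (lam * (1 + m)) ^ (n + 1) <= (1 + lam) ^ (n + 1))
    by (apply pow_incr; split; nra).
  rewrite Rpow_mult_distr, pow_add, pow_1 in Hpow.
  assert (0 < lam ^ n) by (apply pow_lt; lra).
  assert (0 < (1 + lam) ^ (n + 1)) by (apply pow_lt; lra).
  apply (Rmult_le_reg_l (lam ^ n)); [lra|]; rewrite Rinv_r by lra.
  nra.
Qed.

Lemma Rpower_le_Rinv (x e : R) : 1 <= x -> e <= -1 -> Rpower x e <= / x.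
Proof.
  intros Hx He; replace (/ x) with (Rpower x (Ropp 1)) by (rewrite Rpower_Ropp, Rpower_1; lra).
  apply Rle_Rpower; lra.
Qed.

Section RegularGraphExponents.

Variables n j : nat.
Hypothesis hn : (1 <= n)%nat.
Hypothesis hj : (1 <= j)%nat.

Let t := (INR j - 1) / (INR n + 1).

Lemma lambda_nj_Rpower (lam : R) :
  lambda_nj n j lam = Rpower lam (1 - t) * Rpower (mu_n n lam) t.
Proof. reflexivity. Qed.

Lemma exponent_nonneg : 0 <= t.
Proof.
  assert (1 <= INR j) by (apply (le_INR 1); lia).
  assert (0 <= INR n) by apply pos_INR.
  unfold t, Rdiv; apply Rmult_le_pos; [lra|left; apply Rinv_0_lt_compat; lra].
Qed.

Lemma exponent_mul : t * (INR n + 1) = INR j - 1.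
Proof. assert (0 <= INR n) by apply pos_INR. unfold t; field; lra. Qed.

Lemma lambda_nj_ge (lam : R) : 1 / INR n <= lam ->
  lam / (1 + lam) ^ (j - 1) <= lambda_nj n j lam.
Proof.
  intros Hl.
  assert (Hlam : 0 < lam) by (pose proof (INR_inv_pos n ltac:(assumption)); lra).
  assert (Hq : 0 < Rpower (1 + lam) (- (INR n + 1))) by apply exp_pos.
  assert (Hlow : lam * Rpower (1 + lam) (- (INR n + 1)) <= mu_n n lam).
  { replace (INR n + 1) with (INR (n + 1)) by (rewrite plus_INR; simpl; ring).
    rewrite Rpower_Ropp_INR by lra; apply mu_n_ge; auto. }
  rewrite lambda_nj_Rpower.
  apply Rle_trans with
    (Rpower lam (1 - t) * Rpower (lam * Rpower (1 + lam) (- (INR n + 1))) t).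
  - rewrite <- Rpower_mult_distr, Rpower_mult, <- Rmult_assoc, <- Rpower_plus by lra.
    replace (1 - t + t) with 1 by ring.
    replace (- (INR n + 1) * t) with (- INR (j - 1))
      by (rewrite minus_INR by lia; simpl INR; rewrite <- exponent_mul; ring).
    rewrite Rpower_1, Rpower_Ropp_INR by lra; lra.
  - apply Rmult_le_compat_l; [left; apply exp_pos|].
    apply Rle_Rpower_l; [apply exponent_nonneg | split; [nra | exact Hlow]].
Qed.

Lemma lambda_nj_le (lam : R) : 1 / INR n <= lam ->
  lambda_nj n j lam <= Rpower lam (2 - INR j).
Proof.
  intros Hl.
  assert (Hlam : 0 < lam) by (pose proof (INR_inv_pos n ltac:(assumption)); lra).
  rewrite lambda_nj_Rpower.
  replace (2 - INR j) with ((1 - t) + - INR n * t) by (pose proof exponent_mul; lra).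
  rewrite Rpower_plus, <- Rpower_mult, Rpower_Ropp_INR by lra.
  apply Rmult_le_compat_l; [left; apply exp_pos|].
  apply Rle_Rpower_l; [apply exponent_nonneg|].
  split; [apply mu_n_pos|apply mu_n_le]; auto.
Qed.

Lemma lambda_nj_vanishes (eps : R) : (3 <= j)%nat -> 0 < eps ->
  exists M : R, forall lam : R, M <= lam -> Rabs (lambda_nj n j lam) < eps.
Proof.
  intros Hj3 Heps; exists (1 + / eps); intros lam Hl.
  assert (Hie : 0 < / eps) by (apply Rinv_0_lt_compat; lra).
  assert (Hj : 3 <= INR j) by (replace 3 with (INR 3) by (simpl; ring); apply le_INR; lia).
  assert (Hbound : lambda_nj n j lam <= / lam).
  { pose proof (INR_inv_le_1 n hn).
    eapply Rle_trans; [apply lambda_nj_le; lra|].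
    apply Rpower_le_Rinv; lra. }
  assert (0 < lambda_nj n j lam) by (apply Rmult_lt_0_compat; apply exp_pos).
  rewrite Rabs_pos_eq by lra.
  apply (Rle_lt_trans _ (/ lam)); auto.
  rewrite <- (Rinv_inv eps); apply Rinv_lt_contravar; [|lra].
  apply Rmult_lt_0_compat; lra.
Qed.

End RegularGraphExponents.

Theorem proposition2p4 (n j : nat) (hn : (2 <= n)%nat) (hj1 : (1 <= j)%nat)
    (hj2 : (j <= n + 2)%nat) :
  (forall lam : R, 1 / INR n <= lam ->
     lam / (1 + lam) ^ (j - 1) <= lambda_nj n j lam /\
     lambda_nj n j lam <= Rpower lam (2 - INR j) /\
     ((2 <= j)%nat -> lambda_nj n j lam = hat_lambda_nj n (j - 1) lam)) /\
  ((3 <= j)%nat ->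
     forall eps : R, 0 < eps ->
       exists M : R, forall lam : R, M <= lam -> Rabs (lambda_nj n j lam) < eps).
Proof.
  assert (hn1 : (1 <= n)%nat) by lia.
  split.
  - intros lam Hl; repeat split.
    + apply lambda_nj_ge; auto.
    + apply lambda_nj_le; auto.
    + intros _; unfold hat_lambda_nj; f_equal; lia.
  - intros Hj3 eps Heps; apply lambda_nj_vanishes; auto.
Qed.
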